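(* Let $G$ be a connected graph and let $v\in V(G)$ be a cut-vertex such that either (1) $G-v$ has at least three connected components, or (2) $G-v$ has two connected components $G_1,G_2$ such that, for both $i=1,2$, the induced subgraph $G[V(G_i)\cup\{v\}]$ is not isomorphic to a path. Then $v$ is a void vertex of $G$.
   Context: All graphs are finite and simple. For vertices $u,v$ of a connected graph $G$, $d(u,v)$ is the length of a shortest $u$–$v$ path. A set $R\subseteq V(G)$ is a resolving set if for all distinct $x,y\in V(G)$ there is $r\in R$ with $d(r,x)\neq d(r,y)$. The metric dimension $\dim(G)$ is the minimum cardinality of a resolving set, and a resolving set of cardinality $\dim(G)$ is a metric basis. A vertex is a void vertex if it belongs to no metric basis of $G$. A cut-vertex is a vertex $v$ such that $G-v$ is disconnected; $G[S]$ denotes the subgraph induced by $S$. *)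

(* A finite simple graph: vertex type T : finType, adjacency
   relation e : rel T, assumed symmetric and irreflexive in the theorem. *)
From mathcomp Require Import all_boot.
Set Implicit Arguments. Unset Strict Implicit. Unset Printing Implicit Defensive.

Section Graph.
Variables (T : finType) (e : rel T).

Fixpoint nwalk (n : nat) (x y : T) : bool :=
  if n is n'.+1 then [exists z, e x z && nwalk n' z y] else x == y.

(* d(x,y): length of a shortest x-y path = least n with an n-edge walk.
   (In a connected graph this is < #|T|; the value #|T| is a dummy
   used only when no walk exists.) *)
Definition dist (x y : T) : nat :=
  find (fun n => nwalk n x y) (iota 0 #|T|).

Definition connected_graph : Prop := forall x y : T, connect e x y.

Definition resolving (R : {set T}) : Prop :=
  forall x y : T, x != y -> exists2 r, r \in R & dist r x != dist r y.

Definition metric_basis (R : {set T}) : Prop :=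
  resolving R /\ forall S : {set T}, resolving S -> #|R| <= #|S|.

Definition void_vertex (v : T) : Prop :=
  forall R : {set T}, metric_basis R -> v \notin R.

Definition edel (v : T) : rel T := fun x y => [&& e x y, x != v & y != v].

Definition cut_vertex (v : T) : Prop :=
  exists x y : T, [/\ x != v, y != v & ~~ connect (edel v) x y].

Definition components_del (v : T) : {set {set T}} :=
  [set [set y | connect (edel v) x y] | x in [set~ v]].

(* the induced subgraph G[S] is isomorphic to a path P_{|S|}:
   S can be listed without repetition so that two vertices of S are
   adjacent iff they are consecutive in the listing *)
Definition induced_is_path (S : {set T}) : Prop :=
  exists s : seq T,
    [/\ uniq s, S = [set x in s] &
        forall x y, x \in s -> y \in s ->
          e x y = ((index x s).+1 == index y s) || ((index y s).+1 == index x s)].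

End Graph.

From mathcomp Require Import all_boot zify.
Set Implicit Arguments. Unset Strict Implicit. Unset Printing Implicit Defensive.

(* Every shortest walk from outside a component C of G - v into C passes
   through v, so d(r, x) = d(r, v) + d(v, x) whenever r is not in C and x is.
   Hence a landmark r in C sees a pair outside C only through v, and two
   landmarks in different components together separate every pair that v
   separates: a metric basis containing v meets at most one component.
   Conversely a resolving set meets all but at most one component (two
   neighbours of v in missed components would be twins), and if it misses a
   component C then d(v, .) is injective on C + v, which forces G[C + v] to be
   the path listed by increasing distance from v. *)

Section Graph.
Variables (T : finType) (e : rel T).

Lemma nwalk_addP m n x y :
  reflect (exists2 z, nwalk e m x z & nwalk e n z y) (nwalk e (m + n) x y).
Proof.
apply: (iffP idP).
  elim: m x => [|m IH] x /=; first by exists x; rewrite ?eqxx.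
  case/existsP=> z /andP[exz /IH[w zw wy]]; exists w => //.
  by apply/existsP; exists z; rewrite exz.
case=> z; elim: m x => [|m IH] x /=; first by move/eqP->.
case/existsP=> w /andP[exw wz] zy; apply/existsP; exists w.
by rewrite exw (IH w wz zy).
Qed.

Lemma nwalk1 x y : nwalk e 1 x y = e x y.
Proof.
by apply/existsP/idP => [[z /andP[exz /eqP <-]] | exy] //; exists y; rewrite exy eqxx.
Qed.

Lemma path_nwalk p x : path e x p -> nwalk e (size p) x (last x p).
Proof.
elim: p x => [|y p IH] x /=; first by rewrite eqxx.
by case/andP=> exy yp; apply/existsP; exists y; rewrite exy IH.
Qed.

Lemma dist_le n x y : nwalk e n x y -> dist e x y <= n.
Proof.
move=> xy; rewrite leqNgt; apply/negP => lt_n_d.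
have nT : n < #|T|.
  by apply: leq_trans lt_n_d _; rewrite -[X in _ <= X](size_iota 0 #|T|) find_size.
by have := before_find 0 lt_n_d; rewrite nth_iota // add0n xy.
Qed.

Lemma dist_le1 x y : e x y -> dist e x y <= 1.
Proof. by move=> exy; apply: dist_le; rewrite nwalk1. Qed.

Lemma dist_xx x : dist e x x = 0.
Proof. by apply/eqP; rewrite -leqn0; apply: dist_le; rewrite /= eqxx. Qed.

Lemma induced_is_path_labelling (S : {set T}) (f : T -> nat) :
  {in S &, injective f} ->
  {in S, forall y, 0 < f y -> exists2 x, x \in S & f x = (f y).-1} ->
  {in S &, forall x y, e x y = ((f x).+1 == f y) || ((f y).+1 == f x)} ->
  induced_is_path e S.
Proof.
move=> f_inj f_pred f_adj.
have [->|[x0 x0S]] := set_0Vmem S.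
  by exists [::]; split=> //; apply/setP=> x; rewrite !inE.
have f_down i x : x \in S -> i <= f x -> exists2 y, y \in S & f y = i.
  move=> + /subnKC; move: (f x - i) => d; elim: d x => [|d IH] x xS fx.
    by exists x; rewrite // -fx addn0.
  have fx_gt0 : 0 < f x by rewrite -fx addnS.
  have [y yS fy] := f_pred x xS fx_gt0.
  by apply: (IH y yS); rewrite fy -fx addnS.
have [xm xmS xm_max] := arg_maxnP f x0S.
pose m := (f xm).+1.
pose g i := odflt x0 [pick y in S | f y == i].
have gK i : i < m -> g i \in S /\ f (g i) = i.
  move=> /(f_down i xm xmS)[y yS fy]; rewrite /g.
  by case: pickP => [z /andP[zS /eqP fz] | /(_ y)] //=; rewrite yS fy eqxx.
have f_lt x : x \in S -> f x < m by move=> xS; rewrite ltnS; apply: xm_max.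
have fK x : x \in S -> g (f x) = x.
  by move=> xS; have [gS gf] := gK _ (f_lt x xS); apply: f_inj gS xS gf.
pose s := [seq g i | i <- iota 0 m].
have nth_s i : i < m -> nth x0 s i = g i.
  by move=> im; rewrite (nth_map 0) ?size_iota // nth_iota.
have s_mem x : (x \in s) = (x \in S).
  apply/mapP/idP => [[i] | xS].
    by rewrite mem_iota add0n => /andP[_ /gK[gS _]] ->.
  by exists (f x); rewrite ?fK // mem_iota add0n f_lt.
have s_uniq : uniq s.
  rewrite map_inj_in_uniq ?iota_uniq // => i j.
  rewrite !mem_iota !add0n => /andP[_ /gK[_ gi]] /andP[_ /gK[_ gj]] gij.
  by rewrite -gi -gj gij.
have s_index x : x \in S -> index x s = f x.
  move=> xS; rewrite -{1}(fK x xS) -nth_s ?f_lt // index_uniq //.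
  by rewrite size_map size_iota f_lt.
exists s; split=> //; first by apply/setP=> x; rewrite inE s_mem.
by move=> x y; rewrite !s_mem => xS yS; rewrite !s_index //; apply: f_adj.
Qed.

Hypothesis e_sym : symmetric e.

Lemma nwalk_sym n x y : nwalk e n x y = nwalk e n y x.
Proof.
suff walk_rev m a b : nwalk e m a b -> nwalk e m b a by apply/idP/idP; apply: walk_rev.
elim: m a b => [|m IH] a b; first by rewrite /= eq_sym.
case/existsP=> z /andP[eaz zb]; rewrite -addn1; apply/nwalk_addP.
by exists z; [apply: IH | rewrite nwalk1 e_sym].
Qed.

Hypothesis G_conn : connected_graph e.

Lemma nwalk_dist x y : nwalk e (dist e x y) x y.
Proof.
have /connectP[p xp ->] := G_conn x y.
have [q xq q_uniq _] := shortenP xp.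
have has_walk : has (fun n => nwalk e n x (last x q)) (iota 0 #|T|).
  apply/hasP; exists (size q); last exact: path_nwalk.
  by rewrite mem_iota add0n; have := max_card (mem (x :: q)); rewrite (card_uniqP q_uniq).
have d_lt := has_walk; rewrite has_find size_iota in d_lt.
by have := nth_find 0 has_walk; rewrite nth_iota.
Qed.

Lemma dist_eq0 x y : dist e x y = 0 -> x = y.
Proof. by move=> d0; have := nwalk_dist x y; rewrite d0 => /eqP. Qed.

Lemma dist_triangle x y z : dist e x z <= dist e x y + dist e y z.
Proof. by apply: dist_le; apply/nwalk_addP; exists y; apply: nwalk_dist. Qed.

Lemma dist_sym x y : dist e x y = dist e y x.
Proof. by apply/eqP; rewrite eqn_leq !dist_le // nwalk_sym nwalk_dist. Qed.

Lemma dist_adj_le u x y : e x y -> dist e u y <= (dist e u x).+1.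
Proof. by move=> /dist_le1 dxy; have := dist_triangle u x y; lia. Qed.

Lemma dist_pred u y k : dist e u y = k.+1 -> exists2 x, dist e u x = k & e x y.
Proof.
move=> duy; have /nwalk_addP[x ux xy] : nwalk e (k + 1) u y.
  by rewrite addn1 -duy nwalk_dist.
rewrite nwalk1 in xy; exists x => //.
by have := dist_le ux; have := dist_adj_le u xy; lia.
Qed.

Hypothesis e_irr : irreflexive e.

Lemma dist_adj x y : e x y -> dist e x y = 1.
Proof.
move=> exy; apply/eqP; rewrite eqn_leq dist_le1 //= lt0n.
by apply: contraTneq exy => /dist_eq0 ->; rewrite e_irr.
Qed.

Variable v : T.

Lemma edel_sym : symmetric (edel e v).
Proof. by move=> x y; rewrite /edel e_sym [(x != v) && _]andbC. Qed.

Lemma mem_components_del C : C \in components_del e v ->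
  exists2 c, c != v & C = [set y | connect (edel e v) c y].
Proof. by case/imsetP=> c; rewrite in_setC1 => cv ->; exists c. Qed.

Lemma notin_component C : C \in components_del e v -> v \notin C.
Proof.
case/mem_components_del=> c cv ->; rewrite inE (sym_connect_sym edel_sym).
apply/negP=> /connectP[[|x p] /= vp cE]; first by rewrite cE eqxx in cv.
by move: vp; rewrite /edel eqxx andbF.
Qed.

Lemma component_neq C x : C \in components_del e v -> x \in C -> x != v.
Proof. by move=> CP; apply: contraTneq => ->; apply: notin_component. Qed.

Lemma component_edge C x y :
  C \in components_del e v -> x \in C -> e x y -> y != v -> y \in C.
Proof.
move=> CP xC exy yv; have xv := component_neq CP xC.
move: CP xC => /mem_components_del[c _ ->]; rewrite !inE => cx.
by apply: connect_trans cx (connect1 _); rewrite /edel exy xv yv.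
Qed.

Lemma component_eq C1 C2 x : C1 \in components_del e v -> C2 \in components_del e v ->
  x \in C1 -> x \in C2 -> C1 = C2.
Proof.
move=> /mem_components_del[c1 _ ->] /mem_components_del[c2 _ ->].
rewrite !inE => c1x c2x; have csym := sym_connect_sym edel_sym.
have c12 : connect (edel e v) c1 c2 by apply: connect_trans c1x _; rewrite csym.
by apply/setP=> y; rewrite !inE (same_connect csym c12).
Qed.

Lemma nwalk_enter_component C n r x :
  C \in components_del e v -> r \notin C -> x \in C -> nwalk e n r x ->
  exists k z, [/\ k < n, nwalk e k r v, e v z, z \in C & nwalk e (n - k.+1) z x].
Proof.
move=> CP; elim: n r => [|n IH] r rC xC /=.
  by move/eqP=> rx; rewrite rx xC in rC.
case/existsP=> w /andP[erw wx]; have [wC|wC] := boolP (w \in C).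
  have rv : r = v.
    by apply/eqP; apply: contraNT rC; apply: component_edge CP wC _; rewrite e_sym.
  by subst r; exists 0, w; rewrite subn1 /= eqxx.
have [k [z [kn rv vz zC zx]]] := IH w wC xC wx.
by exists k.+1, z; split=> //; apply/existsP; exists w; rewrite erw.
Qed.

Lemma dist_cut C r x : C \in components_del e v -> r \notin C -> x \in C ->
  dist e r x = dist e r v + dist e v x.
Proof.
move=> CP rC xC; apply/eqP; rewrite eqn_leq dist_triangle /=.
have [k [z [kd rv vz _ zx]]] := nwalk_enter_component CP rC xC (nwalk_dist r x).
have vx : nwalk e (1 + (dist e r x - k.+1)) v x.
  by apply/nwalk_addP; exists z; rewrite ?nwalk1.
by have := dist_le rv; have := dist_le vx; lia.
Qed.

Lemma component_neighbour C : C \in components_del e v -> exists2 z, z \in C & e v z.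
Proof.
move=> CP; have [c _ Cc] := mem_components_del CP.
have cC : c \in C by rewrite Cc inE connect0.
have [k [z [_ _ vz zC _]]] :=
  nwalk_enter_component CP (notin_component CP) cC (nwalk_dist v c).
by exists z.
Qed.

Lemma dist_pred_component C y k :
  C \in components_del e v -> y \in C :|: [set v] -> dist e v y = k.+1 ->
  exists2 x, x \in C :|: [set v] & dist e v x = k /\ e x y.
Proof.
move=> CP yS dy; have [x dx exy] := dist_pred dy.
have yv : y != v by apply/eqP => yv; rewrite yv dist_xx in dy.
have yC : y \in C by move: yS; rewrite !inE (negbTE yv) orbF.
exists x => //; rewrite !inE; case: eqP => [_|/eqP xv]; rewrite ?orbT ?orbF //.
by apply: component_edge CP yC _ xv; rewrite e_sym.
Qed.

Lemma component_equidistant_le C r x y :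
  C \in components_del e v -> r \in C -> y \notin C ->
  dist e r x = dist e r y -> dist e v y <= dist e v x.
Proof.
move=> CP rC yC dxy; have := dist_triangle r v x.
by rewrite dxy (dist_sym r y) (dist_cut CP yC rC) (dist_sym y v) (dist_sym r v); lia.
Qed.

Lemma equidistant_two_components C1 C2 r1 r2 x y :
  C1 \in components_del e v -> C2 \in components_del e v -> C1 != C2 ->
  r1 \in C1 -> r2 \in C2 -> dist e r1 x = dist e r1 y -> dist e r2 x = dist e r2 y ->
  dist e v y <= dist e v x.
Proof.
move=> C1P C2P C12 r1C r2C d1 d2.
have [yC1|yC1] := boolP (y \in C1); last exact: component_equidistant_le C1P r1C yC1 d1.
have yC2 : y \notin C2.
  by apply: contra C12 => yC2; apply/eqP; apply: component_eq C1P C2P yC1 yC2.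
exact: component_equidistant_le C2P r2C yC2 d2.
Qed.

Lemma resolving_setD1_cut R C1 C2 : resolving e R ->
  C1 \in components_del e v -> C2 \in components_del e v -> C1 != C2 ->
  ~~ [disjoint R & C1] -> ~~ [disjoint R & C2] -> resolving e (R :\ v).
Proof.
move=> resR C1P C2P C12 /pred0Pn[r1 /andP[r1R r1C]] /pred0Pn[r2 /andP[r2R r2C]] x y xy.
have [/exists_inP[r rR dr] | /exists_inPn same] :=
  boolP [exists r in R :\ v, dist e r x != dist e r y]; first by exists r.
exfalso.
have {}same r : r \in R :\ v -> dist e r x = dist e r y by move/same/negPn/eqP.
have d1 : dist e r1 x = dist e r1 y.
  by apply: same; rewrite !inE (component_neq C1P r1C).
have d2 : dist e r2 x = dist e r2 y.
  by apply: same; rewrite !inE (component_neq C2P r2C).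
have [r rR] := resR x y xy; apply/negP; rewrite negbK.
have [->|rv] := eqVneq r v; last by apply/eqP/same; rewrite !inE rv rR.
by rewrite eqn_leq (equidistant_two_components C1P C2P C12 r1C r2C d1 d2)
  (equidistant_two_components C1P C2P C12 r1C r2C (esym d1) (esym d2)).
Qed.

Lemma resolving_meets_component R C1 C2 : resolving e R ->
  C1 \in components_del e v -> C2 \in components_del e v -> C1 != C2 ->
  [disjoint R & C1] -> ~~ [disjoint R & C2].
Proof.
move=> resR C1P C2P C12 R1; apply/negP => R2.
have [x xC1 vx] := component_neighbour C1P.
have [y yC2 vy] := component_neighbour C2P.
have xy : x != y.
  by apply: contra C12 => /eqP xy; apply/eqP; apply: component_eq C1P C2P xC1 _; rewrite xy.
have [r rR] := resR x y xy; apply/negP; rewrite negbK.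
have rC1 : r \notin C1 by rewrite (disjointFr R1 rR).
have rC2 : r \notin C2 by rewrite (disjointFr R2 rR).
by rewrite (dist_cut C1P rC1 xC1) (dist_cut C2P rC2 yC2) (dist_adj vx) (dist_adj vy).
Qed.

Lemma dist_inj_missed_component R C : resolving e R ->
  C \in components_del e v -> [disjoint R & C] ->
  {in C :|: [set v] &, injective (dist e v)}.
Proof.
move=> resR CP RC x y xS yS dxy; apply/eqP/negPn/negP => xy.
have [r rR] := resR x y xy; apply/negP; rewrite negbK.
have rC : r \notin C by rewrite (disjointFr RC rR).
have d_cut z : z \in C :|: [set v] -> dist e r z = dist e r v + dist e v z.
  by rewrite !inE => /orP[/(dist_cut CP rC) // | /eqP ->]; rewrite dist_xx addn0.
by rewrite (d_cut x) // (d_cut y) // dxy.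
Qed.

Lemma missed_component_path R C : resolving e R ->
  C \in components_del e v -> [disjoint R & C] -> induced_is_path e (C :|: [set v]).
Proof.
move=> resR CP RC; have f_inj := dist_inj_missed_component resR CP RC.
apply: (induced_is_path_labelling f_inj) => [y yS | x y xS yS].
  case dy: (dist e v y) => [//|k] _.
  by have [x xS [dx _]] := dist_pred_component CP yS dy; exists x.
apply/idP/idP => [exy | /orP[] /eqP dxy].
- have /eqP dxy : dist e v x != dist e v y.
    by apply: contraTneq exy => /(f_inj _ _ xS yS) ->; rewrite e_irr.
  have le_yx := dist_adj_le v exy; rewrite e_sym in exy.
  have le_xy := dist_adj_le v exy.
  have [->|->] : dist e v y = (dist e v x).+1 \/ dist e v x = (dist e v y).+1 by lia.
    by rewrite eqxx.
  by rewrite eqxx orbT.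
- have [w wS [dw ewy]] := dist_pred_component CP yS (esym dxy).
  by rewrite -(f_inj _ _ wS xS dw).
- have [w wS [dw ewx]] := dist_pred_component CP xS (esym dxy).
  by rewrite e_sym -(f_inj _ _ wS yS dw).
Qed.

Lemma metric_basis_cut_vertex R : metric_basis e R -> v \in R ->
  #|components_del e v| <= #|[set C in components_del e v | [disjoint R & C]]|.+1.
Proof.
move=> [resR minR] vR; rewrite leqNgt; apply/negP.
set P := components_del e v; set D := [set C in P | _] => PD.
have DP : D \subset P by apply/subsetP => C; rewrite inE => /andP[].
have : 1 < #|P :\: D| by rewrite cardsD (setIidPr DP); lia.
case/card_gt1P=> C1 [C2 []]; rewrite !inE => /andP[+ C1P] /andP[+ C2P].
rewrite C1P C2P /= => R1 R2 C12.
have := minR _ (resolving_setD1_cut resR C1P C2P C12 R1 R2).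
by rewrite (cardsD1 v R) vR; lia.
Qed.

End Graph.

Theorem theorem1 (T : finType) (e : rel T)
  (e_sym : symmetric e) (e_irr : irreflexive e)
  (G_conn : connected_graph e) (v : T) (v_cut : cut_vertex e v) :
  (2 < #|components_del e v| \/
   (#|components_del e v| = 2 /\
    forall C, C \in components_del e v -> ~ induced_is_path e (C :|: [set v]))) ->
  void_vertex e v.
Proof.
(* v_cut is not needed: either case already gives at least two components. *)
move=> many R basisR; apply/negP => vR.
have PD := metric_basis_cut_vertex e_sym G_conn basisR vR.
set D := [set C in _ | _] in PD.
have DP C : C \in D -> C \in components_del e v /\ [disjoint R & C].
  by rewrite inE => /andP.
case: many => [P3 | [P2 not_path]].
- have /card_gt1P[C1 [C2 [/DP[C1P R1] /DP[C2P R2] C12]]] : 1 < #|D| by lia.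
  have := resolving_meets_component e_sym G_conn e_irr basisR.1 C1P C2P C12 R1.
  by rewrite R2.
- have /card_gt0P[C /DP[CP RC]] : 0 < #|D| by lia.
  exact: not_path CP (missed_component_path e_sym G_conn e_irr basisR.1 CP RC).
Qed.
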